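(* Let $\Sigma$ be an alphabet with $|\Sigma|\ge 2$ and let $W\subseteq\Sigma^*$ be any finite set of words. Then there exist minimized DFAs $D$ and $D'$ over $\Sigma$ with $F(D)=F(D')=\varnothing$ and $L(D)\triangle L(D')=W$.
   Context: All DFAs are complete and all states are reachable; a DFA is \emph{minimized} if it is the minimal DFA for its language. For a DFA $D$ with start state $q_0$ and transition function $\delta$, the finite part $F(D)$ is the set of states $r$ such that $\{w\in\Sigma^*:\delta(q_0,w)=r\}$ is finite. *)

From mathcomp Require Import all_boot.
Set Implicit Arguments. Unset Strict Implicit. Unset Printing Implicit Defensive.

Record dfa (Sigma : finType) := DFA {
  state : finType;
  delta : state -> Sigma -> state;
  start : state;
  accept : {set state}
}.

Definition run (Sigma : finType) (D : dfa Sigma) (q : state D) (w : seq Sigma)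
  : state D := foldl (@delta Sigma D) q w.

Definition accepts (Sigma : finType) (D : dfa Sigma) (w : seq Sigma) : bool :=
  run (start D) w \in accept D.

Definition all_reachable (Sigma : finType) (D : dfa Sigma) : Prop :=
  forall q : state D, exists w : seq Sigma, run (start D) w = q.

Definition same_language (Sigma : finType) (D D' : dfa Sigma) : Prop :=
  forall w : seq Sigma, accepts D w = accepts D' w.

Definition minimized (Sigma : finType) (D : dfa Sigma) : Prop :=
  all_reachable D /\
  forall D' : dfa Sigma, same_language D D' -> #|state D| <= #|state D'|.

Definition in_finite_part (Sigma : finType) (D : dfa Sigma) (r : state D) : Prop :=
  exists s : seq (seq Sigma), forall w, run (start D) w = r -> w \in s.

Definition finite_part_empty (Sigma : finType) (D : dfa Sigma) : Prop :=
  forall r : state D, ~ in_finite_part r.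

From mathcomp Require Import all_boot.
From Stdlib Require Import ClassicalEpsilon.
Set Implicit Arguments. Unset Strict Implicit. Unset Printing Implicit Defensive.

(* Let N be the maximal length of a word of W.  Read the input in blocks of
   N+1 letters, accepting when a flag is set and the part of the current block
   read so far is a word of W; the flag starts at p and afterwards records
   whether the previous block ended with a fixed letter b.  The automata for
   p = false and p = true agree once the first block is complete, so they
   disagree exactly on W.  The block a^N b (resp. a^N a) leads from the start
   state back to itself, hence every state has infinitely many access words;
   Nerode minimization preserves the language and this cycle. *)


Lemma run_cat (Sigma : finType) (D : dfa Sigma) (q : state D) u v :
  run q (u ++ v) = run (run q u) v.
Proof. by rewrite /run foldl_cat. Qed.

Lemma run_rcons (Sigma : finType) (D : dfa Sigma) (q : state D) u x :
  run q (rcons u x) = delta (run q u) x.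
Proof. by rewrite /run foldl_rcons. Qed.

Definition classicb (P : Prop) : bool :=
  if excluded_middle_informative P then true else false.

Lemma classicbP (P : Prop) : reflect P (classicb P).
Proof. by rewrite /classicb; case: excluded_middle_informative; constructor. Qed.

Section Nerode.
Variables (Sigma : finType) (D : dfa Sigma).

Definition nerode_equiv (q q' : state D) : Prop :=
  forall z, (run q z \in accept D) = (run q' z \in accept D).

Definition reachable (q : state D) : Prop := exists w, run (start D) w = q.

Lemma nerode_equiv_sym q q' : nerode_equiv q q' -> nerode_equiv q' q.
Proof. by move=> qq' z; rewrite qq'. Qed.

Lemma nerode_equiv_trans q1 q2 q3 :
  nerode_equiv q1 q2 -> nerode_equiv q2 q3 -> nerode_equiv q1 q3.
Proof. by move=> q12 q23 z; rewrite q12 q23. Qed.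

Lemma nerode_equiv_run q q' w :
  nerode_equiv q q' -> nerode_equiv (run q w) (run q' w).
Proof. by move=> qq' z; rewrite -!run_cat qq'. Qed.

Lemma reachable_run q w : reachable q -> reachable (run q w).
Proof. by case=> u <-; exists (u ++ w); rewrite run_cat. Qed.

Lemma reachable_start : reachable (start D).
Proof. by exists [::]. Qed.

End Nerode.

Lemma same_language_nerode (Sigma : finType) (D D' : dfa Sigma) u v :
  same_language D D' -> run (start D') u = run (start D') v ->
  nerode_equiv (run (start D) u) (run (start D) v).
Proof.
move=> DD' uv z; rewrite -!run_cat.
by have := DD' (u ++ z); have := DD' (v ++ z); rewrite /accepts !run_cat uv => -> ->.
Qed.

(* Myhill-Nerode: the access words of D induce an injection into any D' with the same language. *)
Lemma minimized_distinguishable (Sigma : finType) (D : dfa Sigma) :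
  all_reachable D -> (forall q q' : state D, nerode_equiv q q' -> q = q') ->
  minimized D.
Proof.
move=> Dreach Ddist; split=> // D' DD'.
have access q : {w | run (start D) w = q}.
  exact/constructive_indefinite_description/Dreach.
pose g q := run (start D') (sval (access q)).
suff /leq_card : injective g by rewrite !cardE.
move=> q1 q2 /(same_language_nerode DD').
case: (access q1) (access q2) => [w1 w1q1] [w2 w2q2] /=.
by rewrite w1q1 w2q2 => /Ddist.
Qed.

Section FinitePart.
Variables (Sigma : finType) (D : dfa Sigma).

Lemma run_start_cycle_iter r u k : run (start D) r = start D ->
  run (start D) (flatten (nseq k r) ++ u) = run (start D) u.
Proof. by move=> Dr; elim: k => //= k IH; rewrite -catA run_cat Dr. Qed.

Lemma start_cycle_finite_part_empty r : run (start D) r = start D ->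
  0 < size r -> all_reachable D -> finite_part_empty D.
Proof.
move=> Dr r_pos Dreach q [s s_access]; have [u Du] := Dreach q.
pose k := (\max_(w <- s) size w).+1.
have /s_access : run (start D) (flatten (nseq k r) ++ u) = q.
  by rewrite run_start_cycle_iter.
move=> /(@leq_bigmax_seq _ _ predT size)/(_ isT); apply/negP; rewrite -ltnNge.
rewrite size_cat size_flatten /shape map_nseq sumn_nseq.
by apply: leq_trans (leq_addr _ _); rewrite leq_pmull.
Qed.

End FinitePart.

Section Minimize.
Variables (Sigma : finType) (A : dfa Sigma).

(* A reachable Nerode-equivalent representative; the default [q] is only
   used for unreachable [q]. *)
Definition canon (q : state A) : state A :=
  odflt q [pick q' | classicb (reachable q') && classicb (nerode_equiv q q')].

Lemma canon_spec q :
  reachable q -> reachable (canon q) /\ nerode_equiv q (canon q).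
Proof.
rewrite /canon; case: pickP => [q' /andP[/classicbP ? /classicbP ?]|_] //=.
Qed.

Lemma canon_nerode_eq q q' :
  reachable q' -> nerode_equiv q q' -> canon q = canon q'.
Proof.
move=> q'_reach qq'; rewrite /canon.
have same_pred q'' : classicb (nerode_equiv q q'') = classicb (nerode_equiv q' q'').
  apply/classicbP/classicbP => e; last exact: nerode_equiv_trans e.
  exact: nerode_equiv_trans (nerode_equiv_sym qq') e.
rewrite (eq_pick (fun q'' => congr1 (andb _) (same_pred q''))).
case: pickP => //= /(_ q'); rewrite -same_pred.
by move/classicbP: q'_reach => -> /negbT/classicbP[].
Qed.

Lemma canon_run q w : reachable q -> canon (run (canon q) w) = canon (run q w).
Proof.
move=> q_reach; have [cq_reach q_cq] := canon_spec q_reach.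
apply: canon_nerode_eq; first exact: reachable_run.
exact/nerode_equiv_run/nerode_equiv_sym.
Qed.

Lemma canon_accept q : reachable q -> (canon q \in accept A) = (q \in accept A).
Proof. by case/canon_spec => _ /(_ [::]). Qed.

Definition min_state := {q : state A | classicb (reachable q) && (canon q == q)}.

Lemma min_state_reachable (s : min_state) : reachable (val s).
Proof. by case/andP: (valP s) => /classicbP. Qed.

Lemma min_state_canon (s : min_state) : canon (val s) = val s.
Proof. by case/andP: (valP s) => _ /eqP. Qed.

Lemma canon_min_state q :
  reachable q -> classicb (reachable (canon q)) && (canon (canon q) == canon q).
Proof.
move=> q_reach; have [cq_reach _] := canon_spec q_reach.
by apply/andP; split; [apply/classicbP | rewrite -{2}(canon_run [::] q_reach)].
Qed.

Definition min_delta (s : min_state) (x : Sigma) : min_state :=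
  Sub (canon (delta (val s) x))
    (canon_min_state (reachable_run [:: x] (min_state_reachable s))).

Definition minimize : dfa Sigma :=
  @DFA Sigma min_state min_delta (Sub (canon (start A)) (canon_min_state (reachable_start A)))
    [set s : min_state | val s \in accept A].

Lemma run_minimize (s : state minimize) w :
  val (run s w) = canon (run (val s) w).
Proof.
elim: w s => [|x w IH] s; first by rewrite min_state_canon.
rewrite [LHS]IH /= canon_run //.
exact: (reachable_run [:: x] (min_state_reachable s)).
Qed.

Lemma run_minimize_start w :
  val (run (start minimize) w) = canon (run (start A) w).
Proof. by rewrite run_minimize canon_run //; exact: reachable_start. Qed.

Lemma accept_minimize (s : state minimize) w :
  (run s w \in accept minimize) = (run (val s) w \in accept A).
Proof.
by rewrite inE run_minimize canon_accept //; apply/reachable_run/min_state_reachable.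
Qed.

Lemma accepts_minimize w : accepts minimize w = accepts A w.
Proof.
rewrite /accepts inE run_minimize_start canon_accept //.
exact/reachable_run/reachable_start.
Qed.

Lemma minimized_minimize : minimized minimize.
Proof.
apply: minimized_distinguishable => [s|s1 s2 s12].
  have [w ws] := min_state_reachable s.
  by exists w; apply: val_inj; rewrite run_minimize_start ws min_state_canon.
apply: val_inj; rewrite -min_state_canon -[val s2]min_state_canon.
apply: canon_nerode_eq; first exact: min_state_reachable.
by move=> z; rewrite -!accept_minimize.
Qed.

Lemma minimize_finite_part_empty r : run (start A) r = start A ->
  0 < size r -> finite_part_empty minimize.
Proof.
move=> Ar r_pos; apply: (start_cycle_finite_part_empty _ r_pos).
  by apply: val_inj; rewrite run_minimize_start Ar.
by case: minimized_minimize.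
Qed.

End Minimize.

Section BlockAutomaton.
Variables (Sigma : finType) (W : seq (seq Sigma)) (b : Sigma).

Definition max_size := \max_(w <- W) size w.
Local Notation N := max_size.

Lemma size_le_max w : w \in W -> size w <= N.
Proof. by move/(@leq_bigmax_seq _ _ predT size)/(_ isT). Qed.

Definition prefixes := [seq take i w | w <- W, i <- iota 0 (size w).+1].

Lemma take_in_prefixes w i : w \in W -> take i w \in prefixes.
Proof.
move=> wW; wlog i_le : i / i <= size w.
  move=> take_in; case: (leqP i (size w)) => [|/ltnW i_gt]; first exact: take_in.
  by rewrite take_oversize // -(take_size w); apply: take_in.
by apply/allpairsPdep; exists w, i; rewrite mem_iota.
Qed.

Lemma prefixes_rcons u x : rcons u x \in prefixes -> u \in prefixes.
Proof.
case/allpairsPdep => w [i [wW _ uxw]].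
have -> : u = take (size u) (rcons u x) by rewrite -cats1 take_size_cat.
by rewrite uxw -take_min; exact: take_in_prefixes.
Qed.

Definition in_W (o : option (seq_sub prefixes)) : bool :=
  if o is Some u then val u \in W else false.

Lemma in_W_insub z : in_W (insub z) = (z \in W).
Proof.
case: insubP => [u _ <- //|z_pref]; apply/esym/negbTE; apply: contra z_pref => zW.
by rewrite -(take_size z); exact: take_in_prefixes.
Qed.

Definition extend (o : option (seq_sub prefixes)) (x : Sigma)
  : option (seq_sub prefixes) :=
  if o is Some u then insub (rcons (val u) x) else None.

Lemma extend_insub u x : extend (insub u) x = insub (rcons u x).
Proof.
case: insubP => [v _ <- //|u_pref]; rewrite insubN //.
by apply: contra u_pref; exact: prefixes_rcons.
Qed.

(* In a state (p, k, o), k letters of the current block have been read and o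
   is that part of the block if it is a prefix of a word of W; p is the flag. *)
Definition block_state := (bool * 'I_N.+1 * option (seq_sub prefixes))%type.

Definition block_delta (s : block_state) (x : Sigma) : block_state :=
  let: (p, k, o) := s in
  if k < N then (p, inord k.+1, extend o x) else (x == b, ord0, insub [::]).

Definition block_dfa (p : bool) : dfa Sigma :=
  @DFA Sigma block_state block_delta (p, ord0, insub [::]) [set s | s.1.1 && in_W s.2].

Lemma run_block_short p z : size z <= N ->
  run (start (block_dfa p)) z = (p, inord (size z), insub z).
Proof.
elim/last_ind: z => [_|z x IH].
  by rewrite /run /=; congr (_, _, _); apply: val_inj; rewrite /= inordK.
rewrite size_rcons => z_lt.
rewrite run_rcons (IH (ltnW z_lt)) /=.
by rewrite inordK ?z_lt ?extend_insub //; exact: leq_trans z_lt _.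
Qed.

Lemma run_block_long p z : N < size z ->
  run (start (block_dfa p)) z = run (start (block_dfa (nth b z N == b))) (drop N.+1 z).
Proof.
move=> z_gt; rewrite -[z in LHS](cat_take_drop N.+1) (take_nth b z_gt) run_cat.
rewrite run_rcons run_block_short; last by rewrite size_take z_gt.
by rewrite /= size_take z_gt inordK // ltnn.
Qed.

Lemma accepts_block_dfa_diff w :
  (accepts (block_dfa false) w != accepts (block_dfa true) w) = (w \in W).
Proof.
rewrite /accepts; case: (leqP (size w) N) => [w_le|w_gt].
  by rewrite !(run_block_short _ w_le) !inE /= in_W_insub; case: (w \in W).
rewrite !(run_block_long _ w_gt) eqxx /=; apply/esym/negbTE.
by apply: contraL w_gt => /size_le_max; rewrite -leqNgt.
Qed.

(* The block a^N c, with c = b exactly when p holds, resets the flag to p. *)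
Lemma block_dfa_start_cycle p a : a != b ->
  run (start (block_dfa p)) (rcons (nseq N a) (if p then b else a)) = start (block_dfa p).
Proof.
move=> ab; rewrite run_block_long ?size_rcons ?size_nseq //.
rewrite nth_rcons size_nseq ltnn eqxx -cats1 drop_cat size_nseq ltnNge leqnSn /=.
by rewrite subSn // subnn; case: p; rewrite ?eqxx ?(negbTE ab).
Qed.

End BlockAutomaton.

Theorem mainTheorem11 (Sigma : finType) (W : seq (seq Sigma)) :
  2 <= #|Sigma| ->
  exists D D' : dfa Sigma,
    [/\ minimized D, minimized D',
        finite_part_empty D, finite_part_empty D' &
        forall w : seq Sigma, (accepts D w != accepts D' w) = (w \in W)].
Proof.
case/card_gt1P => [a [b [_ _ ab]]].
exists (minimize (block_dfa W b false)), (minimize (block_dfa W b true)); split.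
- exact: minimized_minimize.
- exact: minimized_minimize.
- by apply: (minimize_finite_part_empty (block_dfa_start_cycle W false ab)); rewrite size_rcons.
- by apply: (minimize_finite_part_empty (block_dfa_start_cycle W true ab)); rewrite size_rcons.
- by move=> w; rewrite !accepts_minimize accepts_block_dfa_diff.
Qed.
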